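(* (a) For $n\ge 0$: $a(n)=a(n+1)$ if and only if $n\in\{\lfloor \varphi^2 k\rfloor-1 : k\ge 1\}$. (b) For $n\ge 0$: $a(n)\ne a(n+1)$ if and only if $n\in\{\lfloor \varphi k+1/\varphi\rfloor : k\ge 0\}$. (c) For $n\ge 1$: $a(n)\notin\{a(n-1),a(n+1)\}$ if and only if $n\in\{\lfloor \varphi\lfloor \varphi^2 k\rfloor\rfloor : k\ge 1\}$.
   Context: $\varphi=(1+\sqrt5)/2$. Let $(F_n)_{n\ge 0}$ be the Fibonacci numbers: $F_0=0$, $F_1=1$, $F_n=F_{n-1}+F_{n-2}$ for $n\ge 2$. Define $(a(n))_{n\ge 0}$ (OEIS A105774) by $a(0)=0$, $a(1)=1$, and for $n\ge 2$, $a(n)=F_{j+1}-a(n-F_j)$, where $j\ge 2$ is the unique index with $F_j<n\le F_{j+1}$. *)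

From Stdlib Require Import Reals ZArith Arith.
Open Scope R_scope.

Fixpoint fib (n : nat) : nat :=
  match n with
  | O => O
  | S m => match m with O => 1%nat | S k => (fib m + fib k)%nat end
  end.

(* Search for the least j >= 2 with n <= F_(j+1); for n >= 2 this is the
   unique j >= 2 with F_j < n <= F_(j+1). Fuel n suffices since F_(j+1) >= j. *)
Fixpoint find_j (fuel j n : nat) : nat :=
  match fuel with
  | O => j
  | S f => if Nat.leb n (fib (S j)) then j else find_j f (S j) n
  end.

Definition fib_index (n : nat) : nat := find_j n 2 n.

Fixpoint a_aux (fuel n : nat) : Z :=
  match fuel with
  | O => 0%Z
  | S f =>
      match n with
      | O => 0%Z
      | S O => 1%Z
      | _ => let j := fib_index n in
             (Z.of_nat (fib (S j)) - a_aux f (n - fib j))%Z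
      end
  end.

(* OEIS A105774 *)
Definition a (n : nat) : Z := a_aux n n.

Definition phi : R := (1 + sqrt 5) / 2.

Definition floorR (x : R) : Z := Int_part x.

(* Since phi F_j - F_(j+1) = -(1 - phi)^j is small and, by Cassini's identity, every
   1 <= m < F_(j+1) other than F_j satisfies |phi m - p| > |phi F_j - F_(j+1)| for all
   integers p, one gets floor(phi (m + F_j)) = floor(phi m) + F_(j+1).  Hence the differences
   floor(phi (m+1)) - floor(phi m), which are 1 or 2, shift by F_j exactly like the recursion
   of a, and induction along the Fibonacci blocks shows that a(n) = a(n+1) iff this difference
   at n+1 is 1.  A Beatty-type computation shows that the difference is 2 precisely at the
   lower Wythoff numbers floor(phi k) and 1 precisely at the upper ones floor(phi^2 k). *)

From Stdlib Require Import Reals ZArith Lia Lra.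
Open Scope R_scope.

Lemma fib_SS n : fib (S (S n)) = (fib (S n) + fib n)%nat.
Proof. reflexivity. Qed.

Lemma fib_le_succ n : (fib n <= fib (S n))%nat.
Proof. destruct n; [simpl; lia | rewrite fib_SS; lia]. Qed.

Lemma fib_le_mono i j : (i <= j)%nat -> (fib i <= fib j)%nat.
Proof. induction 1; [lia | pose proof (fib_le_succ m); lia]. Qed.

Lemma fib_pos n : (1 <= n)%nat -> (1 <= fib n)%nat.
Proof. intros Hn. exact (fib_le_mono 1 n Hn). Qed.

Lemma fib_SS_ge n : (S n <= fib (S (S n)))%nat.
Proof.
  induction n; [simpl; lia|].
  rewrite fib_SS. pose proof (fib_pos (S n) ltac:(lia)). lia.
Qed.

Lemma find_j_ge fuel j n : (j <= find_j fuel j n)%nat.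
Proof.
  revert j; induction fuel as [|fuel IH]; intros j; cbn [find_j]; [lia|].
  destruct (Nat.leb n (fib (S j))); [lia|]. specialize (IH (S j)); lia.
Qed.

Lemma find_j_correct fuel j n jj : (j <= jj <= j + fuel)%nat ->
  (forall i, (j <= i < jj)%nat -> (fib (S i) < n)%nat) ->
  (n <= fib (S jj))%nat -> find_j fuel j n = jj.
Proof.
  revert j; induction fuel as [|fuel IH]; intros j Hjj Hbelow Hn; cbn [find_j]; [lia|].
  destruct (Nat.leb_spec n (fib (S j))).
  - destruct (Nat.eq_dec j jj); [easy|]. specialize (Hbelow j ltac:(lia)). lia.
  - destruct (Nat.eq_dec j jj); [subst; lia|].
    apply IH; [lia | intros i Hi; apply Hbelow; lia | easy].
Qed.

Lemma fib_index_correct n j : (2 <= j)%nat -> (fib j < n <= fib (S j))%nat ->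
  fib_index n = j.
Proof.
  intros Hj Hn. apply find_j_correct; [| | lia].
  - pose proof (fib_SS_ge (j - 2)). replace (S (S (j - 2))) with j in * by lia. lia.
  - intros i Hi. pose proof (fib_le_mono (S i) j ltac:(lia)). lia.
Qed.

Lemma fib_block_exists n : (2 <= n)%nat ->
  exists j, (2 <= j)%nat /\ (fib j < n <= fib (S j))%nat.
Proof.
  induction n as [|n IH]; intros Hn; [lia|].
  destruct (Nat.eq_dec n 1) as [->|Hn1]; [exists 2%nat; simpl; lia|].
  destruct (IH ltac:(lia)) as [j [Hj Hnj]].
  destruct (Nat.eq_dec n (fib (S j))).
  - exists (S j). rewrite fib_SS. pose proof (fib_pos j ltac:(lia)). lia.
  - exists j. lia.
Qed.

Lemma a_aux_fuel f1 f2 m : (m <= f1)%nat -> (m <= f2)%nat -> a_aux f1 m = a_aux f2 m.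
Proof.
  revert f2 m; induction f1 as [|f1 IH]; intros f2 m H1 H2.
  - replace m with 0%nat by lia. destruct f2; reflexivity.
  - destruct f2 as [|f2]; [replace m with 0%nat by lia; reflexivity|].
    destruct m as [|[|m]]; [reflexivity | reflexivity |].
    assert (Hidx : (2 <= fib_index (S (S m)))%nat) by apply find_j_ge.
    pose proof (fib_pos (fib_index (S (S m))) ltac:(lia)).
    cbn [a_aux]. f_equal. apply IH; lia.
Qed.

Lemma a_fib_rec n j : (2 <= j)%nat -> (fib j < n <= fib (S j))%nat ->
  a n = (Z.of_nat (fib (S j)) - a (n - fib j))%Z.
Proof.
  intros Hj Hn. pose proof (fib_pos j ltac:(lia)).
  destruct n as [|[|m]]; [lia | lia |]. unfold a at 1.
  change (a_aux (S (S m)) (S (S m))) with (Z.of_nat (fib (S (fib_index (S (S m)))))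
    - a_aux (S m) (S (S m) - fib (fib_index (S (S m)))))%Z.
  rewrite (fib_index_correct (S (S m)) j Hj Hn). f_equal. apply a_aux_fuel; lia.
Qed.

Lemma a_bounds y i : (1 <= y <= fib i)%nat -> (1 <= a y <= Z.of_nat (fib i))%Z.
Proof.
  revert i; induction y as [y IH] using lt_wf_ind; intros i Hy.
  destruct (Nat.eq_dec y 1) as [->|Hy1]; [change (a 1) with 1%Z; lia|].
  destruct (fib_block_exists y ltac:(lia)) as [j [Hj Hyj]].
  rewrite (a_fib_rec y j Hj Hyj).
  destruct j as [|[|j]]; [lia | lia |].
  pose proof (fib_SS (S j)). pose proof (fib_pos (S (S j)) ltac:(lia)).
  pose proof (IH (y - fib (S (S j)))%nat ltac:(lia) (S j) ltac:(lia)).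
  assert (Hi : (S (S (S j)) <= i)%nat).
  { destruct (Nat.le_gt_cases i (S (S j))) as [Hle|]; [|lia].
    pose proof (fib_le_mono _ _ Hle). lia. }
  pose proof (fib_le_mono _ _ Hi). lia.
Qed.

Lemma a_fib_succ_neq j : (2 <= j)%nat -> a (fib (S j)) <> a (S (fib (S j))).
Proof.
  intros Hj. destruct j as [|i]; [lia|].
  pose proof (fib_pos i ltac:(lia)). pose proof (fib_le_succ i).
  pose proof (fib_SS i). pose proof (fib_SS (S i)).
  rewrite (a_fib_rec _ (S i)), (a_fib_rec (S (fib (S (S i)))) (S (S i))); try lia.
  replace (S (fib (S (S i))) - fib (S (S i)))%nat with 1%nat by lia. change (a 1) with 1%Z.
  pose proof (a_bounds (fib (S (S i)) - fib (S i)) (S (S i)) ltac:(lia)). lia.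
Qed.

Lemma phi_sqr : phi * phi = phi + 1.
Proof. unfold phi. pose proof (sqrt_sqrt 5 ltac:(lra)). nra. Qed.

Lemma phi_bounds : 8/5 < phi < 13/8.
Proof. unfold phi. pose proof (sqrt_sqrt 5 ltac:(lra)). pose proof (sqrt_pos 5). nra. Qed.

Definition fib_err (j : nat) : R := INR (fib j) * phi - INR (fib (S j)).

Lemma fib_err_succ j : fib_err (S j) = (1 - phi) * fib_err j.
Proof.
  induction j as [|j IH]; [unfold fib_err; simpl; ring|].
  transitivity (fib_err (S j) + fib_err j).
  - unfold fib_err. rewrite (fib_SS (S j)), (fib_SS j), !plus_INR. ring.
  - rewrite IH.
    replace ((1 - phi) * ((1 - phi) * fib_err j)) with ((phi * phi - 2 * phi + 1) * fib_err j)
      by ring.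
    rewrite phi_sqr. ring.
Qed.

Lemma fib_err_neq0 j : fib_err j <> 0.
Proof.
  induction j as [|j IH]; [unfold fib_err; simpl; lra|].
  rewrite fib_err_succ. pose proof phi_bounds.
  intros E. apply Rmult_integral in E. lra.
Qed.

Lemma fib_err_small j : (2 <= j)%nat -> Rabs (fib_err j) < 1/2.
Proof.
  pose proof phi_bounds. induction 1 as [|j _ IH].
  - unfold fib_err. simpl. rewrite Rabs_left; lra.
  - rewrite fib_err_succ, Rabs_mult, (Rabs_left (1 - phi)) by lra.
    pose proof (Rabs_pos (fib_err j)). nra.
Qed.

Lemma cassini i : let u := Z.of_nat (fib i) in let v := Z.of_nat (fib (S i)) in
  let w := Z.of_nat (fib (S (S i))) in (v * v - u * w = 1 \/ v * v - u * w = -1)%Z.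
Proof.
  induction i as [|i IH]; cbv zeta in *; [simpl; lia|].
  rewrite (fib_SS (S i)), (fib_SS i) in *. rewrite !Nat2Z.inj_add in *. lia.
Qed.

Lemma fib_lattice_coords i (m p : Z) : exists x y : Z,
  m = (x * Z.of_nat (fib (S i)) + y * Z.of_nat (fib i))%Z /\
  p = (x * Z.of_nat (fib (S (S i))) + y * Z.of_nat (fib (S i)))%Z.
Proof.
  pose proof (cassini i) as C. cbv zeta in C.
  set (u := Z.of_nat (fib i)) in *. set (v := Z.of_nat (fib (S i))) in *.
  set (w := Z.of_nat (fib (S (S i)))) in *. set (c := (v * v - u * w)%Z) in *.
  assert (Hc : (c * c = 1)%Z) by lia.
  exists (c * (m * v - p * u))%Z, (c * (p * v - m * w))%Z. split.
  - transitivity (m * (c * c))%Z; [rewrite Hc; ring | unfold c; ring].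
  - transitivity (p * (c * c))%Z; [rewrite Hc; ring | unfold c; ring].
Qed.

Lemma lattice_coords_sign (x y u v : Z) : (1 <= u <= v)%Z ->
  (1 <= x * v + y * u < v + u)%Z -> (x * v + y * u <> v)%Z ->
  ((1 <= x /\ y <= -1) \/ (x <= -1 /\ 1 <= y) \/ (x = 0 /\ 1 <= y))%Z.
Proof.
  intros Huv Hm Hv.
  destruct (Z.lt_trichotomy x 0) as [X|[X|X]];
  destruct (Z.lt_trichotomy y 0) as [Y|[Y|Y]]; subst; try nia.
  destruct (Z.eq_dec x 1); subst; nia.
Qed.

Lemma phi_conj_combination_gt (x y : Z) :
  ((1 <= x /\ y <= -1) \/ (x <= -1 /\ 1 <= y) \/ (x = 0 /\ 1 <= y))%Z ->
  Rabs (1 - phi) < Rabs (IZR x * (1 - phi) + IZR y).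
Proof.
  pose proof phi_bounds. rewrite (Rabs_left (1 - phi)) by lra.
  intros [[X Y]|[[X Y]|[-> Y]]]; apply IZR_le in Y; try apply IZR_le in X.
  - rewrite Rabs_left by nra. nra.
  - rewrite Rabs_right by nra. nra.
  - rewrite Rabs_right by lra. lra.
Qed.

Lemma fib_err_best_approx j m p : (2 <= j)%nat -> (1 <= m < fib (S j))%nat -> m <> fib j ->
  Rabs (fib_err j) < Rabs (phi * INR m - IZR p).
Proof.
  intros Hj Hm HmF. destruct j as [|i]; [lia|].
  pose proof (fib_pos i ltac:(lia)). pose proof (fib_le_succ i). pose proof (fib_SS i).
  destruct (fib_lattice_coords i (Z.of_nat m) p) as [x [y [Em Ep]]].
  assert (Hxy : phi * INR m - IZR p = IZR x * fib_err (S i) + IZR y * fib_err i).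
  { unfold fib_err. rewrite INR_IZR_INZ, Em, Ep, !INR_IZR_INZ, !plus_IZR, !mult_IZR. ring. }
  rewrite Hxy, fib_err_succ.
  replace (IZR x * ((1 - phi) * fib_err i) + IZR y * fib_err i)
    with ((IZR x * (1 - phi) + IZR y) * fib_err i) by ring.
  rewrite !Rabs_mult.
  apply Rmult_lt_compat_r; [apply Rabs_pos_lt, fib_err_neq0|].
  apply phi_conj_combination_gt,
    (lattice_coords_sign _ _ (Z.of_nat (fib i)) (Z.of_nat (fib (S i)))); lia.
Qed.

Lemma floorR_spec x : IZR (floorR x) <= x < IZR (floorR x) + 1.
Proof. unfold floorR. pose proof (base_Int_part x). lra. Qed.

Lemma floorR_unique x z : IZR z <= x < IZR z + 1 -> floorR x = z.
Proof.
  intros Hz. pose proof (floorR_spec x).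
  assert (z < floorR x + 1)%Z by (apply lt_IZR; rewrite plus_IZR; lra).
  assert (floorR x < z + 1)%Z by (apply lt_IZR; rewrite plus_IZR; lra).
  lia.
Qed.

Lemma floorR_add_IZR x z : floorR (x + IZR z) = (floorR x + z)%Z.
Proof. apply floorR_unique. pose proof (floorR_spec x). rewrite plus_IZR. lra. Qed.

Lemma floorR_double x : 0 < Rabs x < 1/2 -> floorR (2 * x) = floorR x.
Proof.
  intros Hx. destruct (Rlt_le_dec 0 x).
  - rewrite Rabs_right in Hx by lra.
    rewrite (floorR_unique (2 * x) 0), (floorR_unique x 0) by lra. reflexivity.
  - rewrite Rabs_left1 in Hx by lra.
    rewrite (floorR_unique (2 * x) (-1)), (floorR_unique x (-1)) by lra. reflexivity.
Qed.

Definition floor_phi (m : nat) : Z := floorR (phi * INR m).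

Lemma floor_phi_spec m : IZR (floor_phi m) <= phi * INR m < IZR (floor_phi m) + 1.
Proof. apply floorR_spec. Qed.

Lemma floor_phi_add_fib j m : (2 <= j)%nat -> (1 <= m < fib (S j))%nat ->
  floor_phi (m + fib j) = (floor_phi m + Z.of_nat (fib (S j)))%Z.
Proof.
  intros Hj Hm. unfold floor_phi.
  replace (phi * INR (m + fib j)) with (phi * INR m + fib_err j + IZR (Z.of_nat (fib (S j))))
    by (unfold fib_err; rewrite plus_INR, <- INR_IZR_INZ; ring).
  rewrite floorR_add_IZR. f_equal.
  pose proof (fib_err_small j Hj). pose proof (Rabs_pos_lt _ (fib_err_neq0 j)).
  destruct (Nat.eq_dec m (fib j)) as [->|HmF].
  - replace (phi * INR (fib j)) with (fib_err j + IZR (Z.of_nat (fib (S j))))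
      by (unfold fib_err; rewrite <- INR_IZR_INZ; ring).
    replace (fib_err j + IZR (Z.of_nat (fib (S j))) + fib_err j)
      with (2 * fib_err j + IZR (Z.of_nat (fib (S j)))) by ring.
    rewrite !floorR_add_IZR, floorR_double by lra. reflexivity.
  - apply floorR_unique. pose proof (floorR_spec (phi * INR m)) as Hfl.
    set (p := floorR (phi * INR m)) in *.
    pose proof (fib_err_best_approx j m p Hj Hm HmF) as Hp.
    pose proof (fib_err_best_approx j m (p + 1) Hj Hm HmF) as Hp1.
    rewrite plus_IZR, (Rabs_left (_ - _)) in Hp1 by lra. rewrite (Rabs_right (_ - _)) in Hp by lra.
    pose proof (Rle_abs (- fib_err j)). rewrite Rabs_Ropp in *.
    pose proof (Rle_abs (fib_err j)). lra.
Qed.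

Lemma phi_mul_not_IZR m p : (1 <= m)%nat -> phi * INR m <> IZR p.
Proof.
  intros Hm E. pose proof (fib_SS_ge m). pose proof (fib_le_succ (S (S m))).
  pose proof (fib_err_best_approx (S (S m)) m p ltac:(lia) ltac:(lia) ltac:(lia)) as Happrox.
  rewrite E, Rminus_diag, Rabs_R0 in Happrox. pose proof (Rabs_pos (fib_err (S (S m)))). lra.
Qed.

Lemma floor_phi_lt m : (1 <= m)%nat -> IZR (floor_phi m) < phi * INR m.
Proof.
  intros Hm. pose proof (floor_phi_spec m). pose proof (phi_mul_not_IZR m (floor_phi m) Hm). lra.
Qed.

Definition phi_gap (m : nat) : Z := (floor_phi (S m) - floor_phi m)%Z.

Lemma phi_gap_cases m : phi_gap m = 1%Z \/ phi_gap m = 2%Z.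
Proof.
  unfold phi_gap. pose proof (floor_phi_spec m). pose proof (floor_phi_spec (S m)).
  rewrite S_INR in *. pose proof phi_bounds.
  assert (floor_phi m < floor_phi (S m))%Z by (apply lt_IZR; lra).
  assert (floor_phi (S m) < floor_phi m + 3)%Z by (apply lt_IZR; rewrite plus_IZR; lra).
  lia.
Qed.

Lemma floor_phi_1 : floor_phi 1 = 1%Z.
Proof. apply floorR_unique. pose proof phi_bounds. simpl. lra. Qed.

Lemma floor_phi_2 : floor_phi 2 = 3%Z.
Proof. apply floorR_unique. pose proof phi_bounds. simpl. lra. Qed.

Lemma floor_phi_3 : floor_phi 3 = 4%Z.
Proof. apply floorR_unique. pose proof phi_bounds. simpl. lra. Qed.

Lemma phi_gap_add_fib j m : (2 <= j)%nat -> (1 <= m)%nat -> (S m < fib (S j))%nat ->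
  phi_gap (m + fib j) = phi_gap m.
Proof.
  intros Hj Hm HmF. unfold phi_gap.
  rewrite <- plus_Sn_m, !floor_phi_add_fib by lia. lia.
Qed.

Lemma phi_gap_fib_succ j : (3 <= j)%nat -> phi_gap (S (fib j)) = 2%Z.
Proof.
  intros Hj. pose proof (fib_le_mono 4 (S j) ltac:(lia)) as HF.
  change (fib 4) with 3%nat in HF.
  unfold phi_gap.
  replace (S (S (fib j))) with (2 + fib j)%nat by lia.
  replace (S (fib j)) with (1 + fib j)%nat by lia.
  rewrite !floor_phi_add_fib by lia.
  rewrite floor_phi_1, floor_phi_2. lia.
Qed.

Lemma a_eq_succ_iff n : a n = a (S n) <-> phi_gap (S n) = 1%Z.
Proof.
  induction n as [n IH] using lt_wf_ind.
  destruct (Nat.lt_ge_cases n 2) as [Hn|Hn].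
  { unfold phi_gap. destruct n as [|[|]]; [| |lia];
      try change (a 0) with 0%Z; change (a 1) with 1%Z; try change (a 2) with 1%Z;
      rewrite ?floor_phi_1, ?floor_phi_2, ?floor_phi_3; lia. }
  destruct (fib_block_exists n Hn) as [j [Hj Hnj]].
  destruct (Nat.eq_dec n (fib (S j))) as [->|HnF].
  { pose proof (a_fib_succ_neq j Hj). rewrite phi_gap_fib_succ by lia. split; intros; easy. }
  assert (Hj3 : (3 <= j)%nat) by (destruct (Nat.eq_dec j 2); [subst; simpl in *; lia | lia]).
  pose proof (fib_le_mono 3 j Hj3) as HF3. change (fib 3) with 2%nat in HF3.
  destruct j as [|i]; [lia|]. pose proof (fib_SS i).
  set (n' := (n - fib (S i))%nat).
  rewrite (a_fib_rec n (S i)), (a_fib_rec (S n) (S i)) by lia.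
  replace (S n) with (S n' + fib (S i))%nat by lia. rewrite phi_gap_add_fib by lia.
  replace (S n' + fib (S i) - fib (S i))%nat with (S n') by lia. fold n'.
  rewrite <- IH by lia. lia.
Qed.

Lemma a_neq_succ_iff n : a n <> a (S n) <-> phi_gap (S n) = 2%Z.
Proof. rewrite a_eq_succ_iff. pose proof (phi_gap_cases (S n)). lia. Qed.

Lemma INR_Z_to_nat k : (0 <= k)%Z -> INR (Z.to_nat k) = IZR k.
Proof. intros Hk. rewrite INR_IZR_INZ, Z2Nat.id by lia. reflexivity. Qed.

Lemma phi_gap_eq2_iff m : (1 <= m)%nat ->
  (exists k, (1 <= k)%nat /\ floor_phi k = Z.of_nat m) <-> phi_gap m = 2%Z.
Proof.
  intros Hm. unfold phi_gap. pose proof phi_sqr. pose proof phi_bounds.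
  pose proof (floor_phi_spec m). pose proof (floor_phi_spec (S m)) as HSm. rewrite S_INR in HSm.
  assert (1 <= INR m) by (apply (le_INR 1); lia).
  rewrite INR_IZR_INZ in *. set (M := Z.of_nat m) in *.
  split.
  - intros [k [Hk Ek]]. pose proof (floor_phi_spec k). pose proof (floor_phi_lt k Hk).
    rewrite Ek, INR_IZR_INZ in *. set (K := Z.of_nat k) in *.
    (* [M < phi K < M + 1] puts [M + K] strictly between [phi M] and [phi (M + 1)]. *)
    assert (IZR M * phi < IZR M + IZR K) by nra.
    assert (IZR M + 1 + IZR K < (IZR M + 1) * phi) by nra.
    assert (floor_phi m < M + K)%Z by (apply lt_IZR; rewrite plus_IZR; lra).
    assert (M + K < floor_phi (S m))%Z by (apply lt_IZR; rewrite plus_IZR; lra).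
    pose proof (phi_gap_cases m). unfold phi_gap in *. lia.
  - intros Hgap. set (k := (floor_phi m + 1 - M)%Z).
    assert (IZR k = IZR (floor_phi m) + 1 - IZR M)
      by (unfold k; rewrite minus_IZR, plus_IZR; ring).
    assert (IZR (floor_phi (S m)) = IZR (floor_phi m) + 2)
      by (replace (floor_phi (S m)) with (floor_phi m + 2)%Z by lia; rewrite plus_IZR; ring).
    assert (IZR M < IZR k * phi) by nra.
    assert (IZR k * phi <= IZR M + 1) by nra.
    assert (Hk : (1 <= k)%Z) by (assert (0 < k)%Z by (apply lt_IZR; nra); lia).
    exists (Z.to_nat k). split; [lia|].
    apply floorR_unique. rewrite INR_Z_to_nat by lia.
    pose proof (phi_mul_not_IZR (Z.to_nat k) (M + 1) ltac:(lia)).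
    rewrite INR_Z_to_nat, plus_IZR in * by lia. lra.
Qed.

Lemma phi_gap_eq1_iff m : (1 <= m)%nat ->
  (exists k, (1 <= k)%nat /\ (floor_phi k + Z.of_nat k = Z.of_nat m)%Z) <-> phi_gap m = 1%Z.
Proof.
  intros Hm. unfold phi_gap. pose proof phi_sqr. pose proof phi_bounds.
  assert ((phi + 1) * (2 - phi) = 1) by nra.
  pose proof (floor_phi_spec m). pose proof (floor_phi_spec (S m)) as HSm. rewrite S_INR in HSm.
  assert (1 <= INR m) by (apply (le_INR 1); lia).
  rewrite INR_IZR_INZ in *. set (M := Z.of_nat m) in *.
  split.
  - intros [k [Hk Ek]]. pose proof (floor_phi_spec k). pose proof (floor_phi_lt k Hk).
    rewrite INR_IZR_INZ in *. set (K := Z.of_nat k) in *.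
    replace (floor_phi k) with (M - K)%Z in * by lia. rewrite minus_IZR in *.
    (* [M < (phi + 1) K < M + 1], and [2 - phi = 1 / (phi + 1)]. *)
    assert (IZR M * (2 - phi) < IZR K) by nra.
    assert (IZR K < (IZR M + 1) * (2 - phi)) by nra.
    assert (2 * M - K <= floor_phi m)%Z.
    { assert (2 * M - K - 1 < floor_phi m)%Z; [|lia].
      apply lt_IZR. rewrite !minus_IZR, mult_IZR. lra. }
    assert (floor_phi (S m) < 2 * M + 2 - K)%Z.
    { apply lt_IZR. rewrite !minus_IZR, plus_IZR, mult_IZR. lra. }
    pose proof (phi_gap_cases m). unfold phi_gap in *. lia.
  - intros Hgap. set (k := (2 * M - floor_phi m)%Z).
    assert (IZR k = 2 * IZR M - IZR (floor_phi m))
      by (unfold k; rewrite minus_IZR, mult_IZR; ring).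
    assert (IZR (floor_phi (S m)) = IZR (floor_phi m) + 1)
      by (replace (floor_phi (S m)) with (floor_phi m + 1)%Z by lia; rewrite plus_IZR; ring).
    assert (IZR M <= IZR k * (phi + 1)) by nra.
    assert (IZR k * (phi + 1) < IZR M + 1) by nra.
    assert (Hk : (1 <= k)%Z) by (assert (0 < k)%Z by (apply lt_IZR; nra); lia).
    exists (Z.to_nat k). split; [lia|].
    enough (floor_phi (Z.to_nat k) = (M - k)%Z) by lia.
    apply floorR_unique. rewrite INR_Z_to_nat by lia.
    pose proof (phi_mul_not_IZR (Z.to_nat k) (M - k) ltac:(lia)).
    rewrite INR_Z_to_nat, minus_IZR in * by lia. lra.
Qed.

Lemma floor_phi_nonneg k : (0 <= floor_phi k)%Z.
Proof.
  pose proof (floor_phi_spec k). pose proof (pos_INR k). pose proof phi_bounds.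
  enough (-1 < floor_phi k)%Z by lia. apply lt_IZR. nra.
Qed.

Lemma floor_phi_lt_iff i j : (floor_phi i < floor_phi j)%Z <-> (i < j)%nat.
Proof.
  assert (Hmono : forall i j, (i < j)%nat -> (floor_phi i < floor_phi j)%Z).
  { intros i' j'; induction 1; pose proof (phi_gap_cases i'); try pose proof (phi_gap_cases m);
      unfold phi_gap in *; lia. }
  split; [|apply Hmono].
  intros Hlt. destruct (Nat.lt_ge_cases i j) as [|Hge]; [easy|].
  destruct (Nat.eq_dec i j) as [->|]; [lia|]. pose proof (Hmono j i ltac:(lia)). lia.
Qed.

Lemma phi_gap_double2_iff m : (1 <= m)%nat ->
  (phi_gap m = 2 /\ phi_gap (S m) = 2)%Z <->
  exists k u, (1 <= k)%nat /\ (floor_phi k + Z.of_nat k = Z.of_nat u)%Z /\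
              floor_phi u = Z.of_nat m.
Proof.
  intros Hm. split.
  - intros [Hgap HgapS].
    apply phi_gap_eq2_iff in Hgap as [u [Hu Eu]]; [|easy].
    apply phi_gap_eq2_iff in HgapS as [u' [Hu' Eu']]; [|lia].
    assert (Hgapu : phi_gap u = 1%Z).
    { destruct (phi_gap_cases u) as [|Hgapu]; [easy|]. exfalso. unfold phi_gap in Hgapu.
      assert (Hlt : (floor_phi u < floor_phi u' < floor_phi (S u))%Z) by lia.
      rewrite !floor_phi_lt_iff in Hlt. lia. }
    apply phi_gap_eq1_iff in Hgapu as [k [Hk Ek]]; [|easy].
    exists k, u. easy.
  - intros [k [u [Hk [Eu Em]]]].
    pose proof (floor_phi_nonneg k).
    assert (Hgapu : phi_gap u = 1%Z) by (apply phi_gap_eq1_iff; [lia | exists k; easy]).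
    split; apply phi_gap_eq2_iff; try lia.
    + exists u. split; [lia | easy].
    + exists (S u). split; [lia|]. unfold phi_gap in Hgapu. lia.
Qed.

Lemma floorR_phi_sqr_mul k : floorR (phi ^ 2 * INR k) = (floor_phi k + Z.of_nat k)%Z.
Proof.
  unfold floor_phi. rewrite <- floorR_add_IZR, <- INR_IZR_INZ. f_equal.
  replace (phi ^ 2) with (phi * phi) by ring. rewrite phi_sqr. ring.
Qed.

Lemma floorR_phi_mul_add_inv k : floorR (phi * INR k + 1 / phi) = (floor_phi (S k) - 1)%Z.
Proof.
  unfold floor_phi. pose proof phi_sqr. pose proof phi_bounds.
  replace (phi * INR (S k)) with (phi * INR k + 1 / phi + IZR 1).
  - rewrite floorR_add_IZR. lia.
  - assert (1 / phi = phi - 1) by (field_simplify_eq; nra).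
    rewrite S_INR. lra.
Qed.

Lemma a_eq_succ_iff_upper n : a n = a (S n) <->
  exists k : nat, (1 <= k)%nat /\ Z.of_nat n = (floorR (phi ^ 2 * INR k) - 1)%Z.
Proof.
  rewrite a_eq_succ_iff, <- phi_gap_eq1_iff by lia.
  split; intros [k [Hk Ek]]; exists k; rewrite floorR_phi_sqr_mul in *; lia.
Qed.

Lemma a_neq_succ_iff_lower n : a n <> a (S n) <->
  exists k : nat, Z.of_nat n = floorR (phi * INR k + 1 / phi).
Proof.
  rewrite a_neq_succ_iff, <- phi_gap_eq2_iff by lia.
  setoid_rewrite floorR_phi_mul_add_inv. split.
  - intros [k [Hk Ek]]. exists (k - 1)%nat. replace (S (k - 1)) with k by lia. lia.
  - intros [k Ek]. exists (S k). split; lia.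
Qed.

Lemma a_isolated_iff n : (1 <= n)%nat ->
  (a n <> a (n - 1)%nat /\ a n <> a (S n)) <->
  exists k : nat, (1 <= k)%nat /\ Z.of_nat n = floorR (phi * IZR (floorR (phi ^ 2 * INR k))).
Proof.
  intros Hn. destruct n as [|n]; [lia|]. replace (S n - 1)%nat with n by lia.
  assert (Hprev : a (S n) <> a n <-> phi_gap (S n) = 2%Z)
    by (rewrite <- a_neq_succ_iff; split; congruence).
  rewrite Hprev, a_neq_succ_iff, phi_gap_double2_iff by lia. split.
  - intros [k [u [Hk [Eu Em]]]]. exists k. split; [easy|].
    rewrite floorR_phi_sqr_mul, Eu, <- INR_IZR_INZ. symmetry. exact Em.
  - intros [k [Hk Ek]]. pose proof (floor_phi_nonneg k).
    exists k, (Z.to_nat (floor_phi k + Z.of_nat k)). rewrite Z2Nat.id by lia.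
    split; [easy | split; [easy|]].
    unfold floor_phi at 1. rewrite INR_Z_to_nat, Ek, floorR_phi_sqr_mul by lia. reflexivity.
Qed.

Theorem proposition9 :
  (forall n : nat,
     a n = a (S n) <->
     exists k : nat, (1 <= k)%nat /\
       Z.of_nat n = (floorR (phi ^ 2 * INR k) - 1)%Z)
  /\
  (forall n : nat,
     a n <> a (S n) <->
     exists k : nat, Z.of_nat n = floorR (phi * INR k + 1 / phi))
  /\
  (forall n : nat, (1 <= n)%nat ->
     (a n <> a (n - 1)%nat /\ a n <> a (S n)) <->
     exists k : nat, (1 <= k)%nat /\
       Z.of_nat n = floorR (phi * IZR (floorR (phi ^ 2 * INR k)))).
Proof.
  split; [|split].
  - exact a_eq_succ_iff_upper.
  - exact a_neq_succ_iff_lower.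
  - exact a_isolated_iff.
Qed.
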